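(* For any $\epsilon,\gamma>0$ and any graph $\mathcal{G}=(\mathcal{V},\mathcal{E})$ containing a perfect matching, with $V=|\mathcal{V}|$ and $E=|\mathcal{E}|$, there is an algorithm $\mathcal{A}$ that is $\epsilon$-differentially private on $\mathcal{G}$ that on input $w:\mathcal{E}\to\mathbb{R}$ releases, with probability at least $1-\gamma$, a perfect matching of $\mathcal{G}$ whose weight is at most $(V/\epsilon)\ln(E/\gamma)$ larger than the minimum weight of a perfect matching of $(\mathcal{G},w)$.
   Context: Private edge weight model (with real, possibly negative, weights): for a graph $\mathcal{G}=(\mathcal{V},\mathcal{E})$, a weight function is $w:\mathcal{E}\to\mathbb{R}$. Two weight functions $w,w'$ are neighboring if $\sum_{e\in\mathcal{E}}|w(e)-w'(e)|\le1$. A randomized algorithm $\mathcal{A}$ on weight functions is $\epsilon$-differentially private on $\mathcal{G}$ if for all neighboring $w,w'$ and all sets $S$ of outputs, $\Pr[\mathcal{A}(w)\in S]\le e^{\epsilon}\Pr[\mathcal{A}(w')\in S]$. The weight of a matching is the sum of its edge weights. *)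

From HB Require Import structures.
From mathcomp Require Import all_boot all_order all_algebra.
From mathcomp Require Import all_classical all_reals all_analysis.
Set Implicit Arguments. Unset Strict Implicit. Unset Printing Implicit Defensive.
Import Order.TTheory GRing.Theory Num.Theory.
Local Open Scope ring_scope.

Definition simple_graph (T Ed : finType) (ends : Ed -> {set T}) : Prop :=
  injective ends /\ forall x : Ed, #|ends x| = 2%N.

Definition perfect_matching (T Ed : finType) (ends : Ed -> {set T})
  (M : {set Ed}) : bool :=
  [forall v : T, #|[set x in M | v \in ends x]| == 1%N].

Definition mweight (R : realType) (Ed : finType) (w : Ed -> R) (M : {set Ed}) : R :=
  \sum_(x in M) w x.

(* A randomized algorithm with outputs in the finite set {set Ed} is given by
   its output distribution on each input w. *)
Definition is_distr (R : realType) (O : finType) (p : {ffun O -> R}) : Prop :=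
  (forall o, 0 <= p o) /\ \sum_(o : O) p o = 1.

Definition Prob (R : realType) (O : finType) (p : {ffun O -> R}) (S : {set O}) : R :=
  \sum_(o in S) p o.

Definition neighboring (R : realType) (Ed : finType) (w w' : Ed -> R) : Prop :=
  \sum_(x : Ed) `|w x - w' x| <= 1.

Definition diff_private (R : realType) (Ed O : finType) (eps : R)
  (A : (Ed -> R) -> {ffun O -> R}) : Prop :=
  forall w w' : Ed -> R, neighboring w w' ->
  forall S : {set O}, Prob (A w) S <= expR eps * Prob (A w') S.

Definition good_output (R : realType) (T Ed : finType) (ends : Ed -> {set T})
  (w : Ed -> R) (b : R) : {set {set Ed}} :=
  [set M | perfect_matching ends M &&
     [forall M' : {set Ed}, perfect_matching ends M' ==> (mweight w M <= mweight w M' + b)]].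

(* The mechanism is the exponential mechanism at scale eps/2: it outputs a
   perfect matching M with probability proportional to exp(-(eps/2) w(M)).
   For neighbouring weights every w(M) moves by at most 1, so each
   unnormalised probability and the normalising constant move by a factor
   at most exp(eps/2), and the probabilities by at most exp(eps).  A perfect
   matching whose excess weight exceeds b is at most exp(-(eps/2) b) times as
   likely as an optimal one; all perfect matchings have V/2 edges, so there
   are at most E^(V/2) of them, and for b = (V/eps) ln(E/gamma) the bad
   outputs have total probability at most gamma^(V/2) <= gamma. *)

From HB Require Import structures.
From mathcomp Require Import all_boot all_order all_algebra.
From mathcomp Require Import all_classical all_reals all_analysis.
From mathcomp Require Import ring lra.
Set Implicit Arguments. Unset Strict Implicit. Unset Printing Implicit Defensive.
Import Order.TTheory GRing.Theory Num.Theory.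
Local Open Scope ring_scope.

Lemma ffact_leq_exp n m : (n ^_ m <= n ^ m)%N.
Proof.
rewrite ffact_prod -[X in (_ <= _ ^ X)%N]card_ord -prod_nat_const.
by apply: leq_prod => i _; exact: leq_subr.
Qed.

Lemma bin_leq_exp n m : ('C(n, m) <= n ^ m)%N.
Proof.
apply: leq_trans (ffact_leq_exp n m).
by rewrite -bin_ffact leq_pmulr ?fact_gt0.
Qed.

Lemma Prob_setC (R : realType) (O : finType) (p : {ffun O -> R}) (S : {set O}) :
  is_distr p -> Prob p (~: S) = 1 - Prob p S.
Proof.
move=> [_ p_sum1]; rewrite -p_sum1 /Prob [X in X - _](bigID [in S]) /=.
rewrite [in RHS]addrC addrK.
by apply: eq_bigl => o; rewrite inE.
Qed.

Lemma Prob_ge0 (R : realType) (O : finType) (p : {ffun O -> R}) (S : {set O}) :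
  is_distr p -> 0 <= Prob p S.
Proof. by move=> [p_ge0 _]; exact: sumr_ge0. Qed.

Section ExponentialMechanism.
Variables (R : realType) (O : finType) (P : pred O) (s : R).
Hypothesis s_ge0 : 0 <= s.

Definition gibbs_weight (u : O -> R) (o : O) : R :=
  if P o then expR (- (s * u o)) else 0.

Definition partition_function (u : O -> R) : R := \sum_o gibbs_weight u o.

Definition exp_mech (u : O -> R) : {ffun O -> R} :=
  [ffun o => gibbs_weight u o / partition_function u].

Lemma gibbs_weight_ge0 u o : 0 <= gibbs_weight u o.
Proof. by rewrite /gibbs_weight; case: ifP => // _; exact: expR_ge0. Qed.

Lemma gibbs_weight_le_partition u o : gibbs_weight u o <= partition_function u.
Proof.
rewrite /partition_function (bigD1 o) //= lerDl.
by apply: sumr_ge0 => *; exact: gibbs_weight_ge0.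
Qed.

Variable o0 : O.
Hypothesis Po0 : P o0.

Lemma partition_function_gt0 u : 0 < partition_function u.
Proof.
apply: lt_le_trans (gibbs_weight_le_partition u o0).
by rewrite /gibbs_weight Po0 expR_gt0.
Qed.

Lemma Prob_exp_mech u S :
  Prob (exp_mech u) S = (\sum_(o in S) gibbs_weight u o) / partition_function u.
Proof. by rewrite /Prob mulr_suml; apply: eq_bigr => o _; rewrite ffunE. Qed.

Lemma exp_mech_distr u : is_distr (exp_mech u).
Proof.
have Z_gt0 := partition_function_gt0 u.
split; first by move=> o; rewrite ffunE divr_ge0 ?gibbs_weight_ge0 ?ltW.
rewrite [LHS](_ : _ = Prob (exp_mech u) [set: O]).
  by rewrite Prob_exp_mech; under eq_bigl do rewrite inE; rewrite divff ?gt_eqF.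
by apply: eq_bigl => o; rewrite inE.
Qed.

Lemma gibbs_weight_shift u u' o : (P o -> `|u o - u' o| <= 1) ->
  gibbs_weight u o <= expR s * gibbs_weight u' o.
Proof.
rewrite /gibbs_weight; case: (P o) => [/(_ isT)/ler_normlP[du _]|_]; last first.
  by rewrite mulr0.
rewrite -expRD ler_expR.
have := ler_wpM2l s_ge0 du; lra.
Qed.

Lemma exp_mech_private u u' : (forall o, P o -> `|u o - u' o| <= 1) ->
  forall S, Prob (exp_mech u) S <= expR (s *+ 2) * Prob (exp_mech u') S.
Proof.
move=> du S; rewrite !Prob_exp_mech mulr2n expRD mulrACA.
have Z_gt0 := partition_function_gt0 u; have Z'_gt0 := partition_function_gt0 u'.
have num : \sum_(o in S) gibbs_weight u o <= expR s * \sum_(o in S) gibbs_weight u' o.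
  by rewrite mulr_sumr; apply: ler_sum => o _; exact/gibbs_weight_shift/du.
have den : partition_function u' <= expR s * partition_function u.
  rewrite mulr_sumr; apply: ler_sum => o _.
  by apply: gibbs_weight_shift => /du; rewrite distrC.
have inv_den : (partition_function u)^-1 <= expR s / partition_function u'.
  by rewrite ler_pdivlMr // mulrC ler_pdivrMr // mulrC.
apply: ler_pM num inv_den; last by rewrite invr_ge0 ltW.
by apply: sumr_ge0 => o _; exact: gibbs_weight_ge0.
Qed.

(* With [P := perfect_matching ends] and [u := mweight w] this is
   [good_output ends w t]. *)
Definition near_optimal (u : O -> R) (t : R) : {set O} :=
  [set o | P o && [forall o1, P o1 ==> (u o <= u o1 + t)]].

Lemma exp_mech_suboptimal u t o : P o -> o \notin near_optimal u t ->
  exp_mech u o <= expR (- (s * t)).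
Proof.
rewrite inE ffunE => Po; rewrite Po /=; case/forallPn => o1.
rewrite negb_imply -ltNge => /andP[Po1 lt_o1o].
have Z_gt0 := partition_function_gt0 u.
rewrite ler_pdivrMr //.
apply: le_trans (ler_wpM2l (expR_ge0 _) (gibbs_weight_le_partition u o1)).
rewrite /gibbs_weight Po Po1 -expRD ler_expR.
have := ler_wpM2l s_ge0 (ltW lt_o1o); lra.
Qed.

Lemma exp_mech_utility u t :
  1 - expR (- (s * t)) *+ #|[set o | P o] :\: near_optimal u t|
    <= Prob (exp_mech u) (near_optimal u t).
Proof.
rewrite -[X in _ <= Prob _ X]finset.setCK Prob_setC; last exact: exp_mech_distr.
rewrite lerD2l lerN2.
rewrite -sumr_const /Prob big_mkcond [X in _ <= X]big_mkcond /=.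
apply: ler_sum => o _; rewrite !inE; case: (boolP (P o)) => [Po|nPo] /=.
  rewrite andbT; case: ifP => // not_opt.
  by apply: exp_mech_suboptimal; rewrite // inE Po not_opt.
by rewrite ffunE /gibbs_weight (negbTE nPo) mul0r.
Qed.

Lemma near_optimal_const u t : 0 <= t ->
  (forall o o1, P o -> P o1 -> u o = u o1) ->
  #|[set o | P o] :\: near_optimal u t| = 0%N.
Proof.
move=> t_ge0 u_const; apply/eqP; rewrite cards_eq0; apply/eqP/setP => o.
rewrite !inE andbC; case: (boolP (P o)) => Po //=.
apply/negbF/forall_inP => o1 Po1.
by rewrite (u_const o o1) // lerDl.
Qed.

End ExponentialMechanism.

Section PerfectMatchings.
Variables (T Ed : finType) (ends : Ed -> {set T}).
Hypothesis card_ends : forall x, #|ends x| = 2%N.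

Lemma card_perfect_matching M : perfect_matching ends M -> #|T| = (#|M| * 2)%N.
Proof.
move=> /forallP pmM; rewrite -[#|T|]sum1_card.
transitivity (\sum_v \sum_(x in M) (v \in ends x : nat)).
  apply: eq_bigr => v _; rewrite -(eqP (pmM v)) -sum1_card big_mkcond [RHS]big_mkcond.
  by apply: eq_bigr => x _; rewrite inE; case: (x \in M); case: (v \in ends x).
rewrite exchange_big /= -sum_nat_const; apply: eq_bigr => x _.
rewrite -(card_ends x) -sum1_card [RHS]big_mkcond.
by apply: eq_bigr => v _; case: (v \in ends x).
Qed.

Lemma card_perfect_matchings_le M0 : perfect_matching ends M0 ->
  (#|[set M | perfect_matching ends M]| <= #|Ed| ^ #|M0|)%N.
Proof.
move=> pmM0; apply: leq_trans (bin_leq_exp _ _); rewrite -card_draws.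
apply/subset_leq_card/fintype.subsetP => M; rewrite !inE => pmM.
by rewrite -(eqn_pmul2r (isT : 0 < 2)%N) -!card_perfect_matching.
Qed.

Lemma perfect_matching_card_gt0 M : perfect_matching ends M ->
  (0 < #|Ed|)%N -> (0 < #|M|)%N.
Proof.
move=> pmM /card_gt0P[x _].
have := max_card (mem (ends x)).
by rewrite card_ends (card_perfect_matching pmM); case: #|M|.
Qed.

End PerfectMatchings.

Lemma mweight_neighboring (R : realType) (Ed : finType) (w w' : Ed -> R) M :
  neighboring w w' -> `|mweight w M - mweight w' M| <= 1.
Proof.
move=> ww'; apply: le_trans ww'; rewrite /mweight -sumrB.
apply: le_trans (ler_norm_sum _ _ _) _.
rewrite [X in _ <= X](bigID [in M]) /= lerDl.
by apply: sumr_ge0 => x _.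
Qed.

Lemma expR_ln_pow (R : realType) (n k : nat) (gamma : R) :
  0 < gamma -> (0 < n)%N ->
  expR (- (k%:R * ln (n%:R / gamma))) *+ (n ^ k) = gamma ^+ k.
Proof.
move=> gamma_gt0 n_gt0.
have ratio_gt0 : 0 < n%:R / gamma by rewrite divr_gt0 ?ltr0n.
rewrite expRN expRM_natl lnK ?posrE // -[_ *+ (n ^ k)]mulr_natl natrX -exprVn -exprMn.
by rewrite invf_div mulrCA divff ?mulr1 // pnatr_eq0 -lt0n.
Qed.

Theorem theoremB6 (R : realType) (T Ed : finType) (ends : Ed -> {set T})
  (hG : simple_graph ends)
  (hpm : exists M : {set Ed}, perfect_matching ends M)
  (eps gamma : R) (heps : 0 < eps) (hgamma : 0 < gamma) :
  exists A : (Ed -> R) -> {ffun {set Ed} -> R},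
    (forall w, is_distr (A w)) /\
    diff_private eps A /\
    (forall w : Ed -> R,
       1 - gamma <= Prob (A w)
         (good_output ends w ((#|T|%:R / eps) * ln (#|Ed|%:R / gamma)))).
Proof.
have [M0 pmM0] := hpm; have [_ card_ends] := hG.
have s_ge0 : 0 <= eps / 2 by rewrite divr_ge0 ?ltW.
pose A w := exp_mech (perfect_matching ends) (eps / 2) (mweight w).
exists A; split; [|split].
- by move=> w; exact: exp_mech_distr _ pmM0 _.
- move=> w w' ww' S; rewrite {1}[eps]splitr -mulr2n.
  by apply: (exp_mech_private s_ge0 pmM0) => M _; exact: mweight_neighboring.
- move=> w; set b := _ * _.
  have [gamma_ge1|gamma_lt1] := lerP 1 gamma.
    by apply: le_trans (Prob_ge0 _ (exp_mech_distr _ pmM0 _)); rewrite subr_le0.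
  apply: le_trans (exp_mech_utility s_ge0 pmM0 _ b).
  have [E0|E_gt0] := posnP #|Ed|.
    (* no edges: all weights vanish and ln 0 = 0, so nothing is bad *)
    have b_ge0 : 0 <= b by rewrite /b E0 mul0r ln0 ?mulr0.
    have weight0 M : mweight w M = 0.
      by rewrite /mweight big_pred0 // => x; have := card0_eq E0 x; rewrite !inE.
    by rewrite near_optimal_const // => [|M M1 _ _]; rewrite ?weight0 // subr0 gerBl ltW.
  have k_gt0 := perfect_matching_card_gt0 card_ends pmM0 E_gt0.
  have -> : eps / 2 * b = #|M0|%:R * ln (#|Ed|%:R / gamma).
    by rewrite /b (card_perfect_matching card_ends pmM0) natrM; field; rewrite gt_eqF.
  rewrite lerD2l lerN2; apply: le_trans (ler_iXnr k_gt0 (ltW hgamma) (ltW gamma_lt1)).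
  rewrite -(expR_ln_pow _ hgamma E_gt0) ler_wpMn2l ?expR_ge0 //.
  have := card_perfect_matchings_le card_ends pmM0.
  exact/leq_trans/subset_leq_card/subsetDl.
Qed.
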